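(* Let $\Psi$ be a well-formed declarative context (containing only universal type variables and term-variable typings) and $A,B$ types with $\Psi\vdash A$ and $\Psi\vdash B$. If $\Psi\vdash A<:B\dashv\Delta$ for some context $\Delta$ (algorithmic subtyping), then $\Psi\vdash A\le B$ (declarative subtyping).
   Context: Declarative types $A ::= 1\mid\alpha\mid\forall\alpha.A\mid A\to B$; declarative contexts $\Psi ::= \cdot\mid\Psi,\alpha\mid\Psi,x:A$. Declarative subtyping $\Psi\vdash A\le B$: least relation with $\alpha\in\Psi\Rightarrow\Psi\vdash\alpha\le\alpha$; $\Psi\vdash1\le1$; ($\Psi\vdash B_1\le A_1$, $\Psi\vdash A_2\le B_2$) $\Rightarrow\Psi\vdash A_1\to A_2\le B_1\to B_2$; ($\Psi\vdash\tau$ for a quantifier-free $\tau$, $\Psi\vdash[\tau/\alpha]A\le B$) $\Rightarrow\Psi\vdash\forall\alpha.A\le B$; $\Psi,\beta\vdash A\le B\Rightarrow\Psi\vdash A\le\forall\beta.B$. Algorithmic types add existential variables $\hat\alpha$: $A ::= 1\mid\alpha\mid\hat\alpha\mid\forall\alpha.A\mid A\to B$; monotypes $\tau ::= 1\mid\alpha\mid\hat\alpha\mid\tau\to\tau'$. Algorithmic contexts $\Gamma ::= \cdot\mid\Gamma,\alpha\mid\Gamma,x:A\mid\Gamma,\hat\alpha\mid\Gamma,\hat\alpha=\tau\mid\Gamma,\blacktriangleright_{\hat\alpha}$ (unsolved evar, solved evar, marker), each variable declared at most once, each type/solution well-formed under the prefix to its left. $\Gamma\vdash A$: $\alpha$ declared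 in $\Gamma$, $\hat\alpha$ declared (solved or not) in $\Gamma$, arrows componentwise, $\Gamma\vdash\forall\alpha.A$ iff $\Gamma,\alpha\vdash A$. $\Gamma[\Theta]$ denotes a context with $\Theta$ somewhere inside; $\Gamma[\hat\alpha][\hat\beta]$ means $\hat\alpha$ is declared to the left of $\hat\beta$. $[\Gamma]A$ replaces each solved $\hat\alpha$ (with $\hat\alpha=\tau\in\Gamma$) by $[\Gamma]\tau$, recursively. Variables introduced in premises ($\hat\alpha,\hat\alpha_1,\hat\alpha_2,\hat\beta,\beta$) are fresh. Algorithmic subtyping $\Gamma\vdash A<:B\dashv\Delta$: $\Gamma[\alpha]\vdash\alpha<:\alpha\dashv\Gamma[\alpha]$; $\Gamma\vdash1<:1\dashv\Gamma$; $\Gamma[\hat\alpha]\vdash\hat\alpha<:\hat\alpha\dashv\Gamma[\hat\alpha]$; ($\Gamma\vdash B_1<:A_1\dashv\Theta$, $\Theta\vdash[\Theta]A_2<:[\Theta]B_2\dashv\Delta$) $\Rightarrow\Gamma\vdash A_1\to A_2<:B_1\to B_2\dashv\Delta$; $\Gamma,\blacktriangleright_{\hat\alpha},\hat\alpha\vdash[\hat\alpha/\alpha]A<:B\dashv\Delta,\blacktriangleright_{\hat\alpha},\Theta\Rightarrow\Gamma\vdash\forall\alpha.A<:B\dashv\Delta$; $\Gamma,\alpha\vdash A<:B\dashv\Delta,\alpha,\Theta\Rightarrow\Gamma\vdash A<:\forall\alpha.B\dashv\Delta$; ($\hat\alpha\notin FV(A)$, $\Gamma[\hat\alpha]\vdash\hat\alpha:\leqq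 A\dashv\Delta$) $\Rightarrow\Gamma[\hat\alpha]\vdash\hat\alpha<:A\dashv\Delta$; ($\hat\alpha\notin FV(A)$, $\Gamma[\hat\alpha]\vdash A\leqq:\hat\alpha\dashv\Delta$) $\Rightarrow\Gamma[\hat\alpha]\vdash A<:\hat\alpha\dashv\Delta$. Instantiation $\Gamma\vdash\hat\alpha:\leqq A\dashv\Delta$: ($\Gamma\vdash\tau$ monotype) $\Rightarrow\Gamma,\hat\alpha,\Gamma'\vdash\hat\alpha:\leqq\tau\dashv\Gamma,\hat\alpha=\tau,\Gamma'$; $\Gamma[\hat\alpha][\hat\beta]\vdash\hat\alpha:\leqq\hat\beta\dashv\Gamma[\hat\alpha][\hat\beta=\hat\alpha]$; ($\Gamma[\hat\alpha_2,\hat\alpha_1,\hat\alpha=\hat\alpha_1\to\hat\alpha_2]\vdash A_1\leqq:\hat\alpha_1\dashv\Theta$, $\Theta\vdash\hat\alpha_2:\leqq[\Theta]A_2\dashv\Delta$) $\Rightarrow\Gamma[\hat\alpha]\vdash\hat\alpha:\leqq A_1\to A_2\dashv\Delta$; $\Gamma[\hat\alpha],\beta\vdash\hat\alpha:\leqq B\dashv\Delta,\beta,\Delta'\Rightarrow\Gamma[\hat\alpha]\vdash\hat\alpha:\leqq\forall\beta.B\dashv\Delta$. Instantiation $\Gamma\vdash A\leqq:\hat\alpha\dashv\Delta$: ($\Gamma\vdash\tau$) $\Rightarrow\Gamma,\hat\alpha,\Gamma'\vdash\tau\leqq:\hat\alpha\dashv\Gamma,\hat\alpha=\tau,\Gamma'$;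 $\Gamma[\hat\alpha][\hat\beta]\vdash\hat\beta\leqq:\hat\alpha\dashv\Gamma[\hat\alpha][\hat\beta=\hat\alpha]$; ($\Gamma[\hat\alpha_2,\hat\alpha_1,\hat\alpha=\hat\alpha_1\to\hat\alpha_2]\vdash\hat\alpha_1:\leqq A_1\dashv\Theta$, $\Theta\vdash[\Theta]A_2\leqq:\hat\alpha_2\dashv\Delta$) $\Rightarrow\Gamma[\hat\alpha]\vdash A_1\to A_2\leqq:\hat\alpha\dashv\Delta$; $\Gamma[\hat\alpha],\blacktriangleright_{\hat\beta},\hat\beta\vdash[\hat\beta/\beta]B\leqq:\hat\alpha\dashv\Delta,\blacktriangleright_{\hat\beta},\Delta'\Rightarrow\Gamma[\hat\alpha]\vdash\forall\beta.B\leqq:\hat\alpha\dashv\Delta$. *)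

(* Locally nameless encoding of the Dunfield-Krishnaswami
   declarative and algorithmic subtyping systems. *)
From Stdlib Require Import List Arith.
Import ListNotations.

(* Bound (universal) variables are de Bruijn indices [TBVar];
   free universal variables [TFVar a] and existential variables [TEx a]
   are named by natural numbers. [TAll A] binds index 0 in [A]. *)
Inductive typ : Type :=
| TUnit : typ
| TBVar : nat -> typ
| TFVar : nat -> typ
| TEx   : nat -> typ
| TAll  : typ -> typ
| TArr  : typ -> typ -> typ.

(* opening: [open A u] = [u/alpha]A where alpha is the variable bound by
   the outermost forall whose body is A (u is locally closed). *)
Fixpoint open_rec (k : nat) (u : typ) (A : typ) : typ :=
  match A with
  | TBVar n => if Nat.eqb n k then u else TBVar n
  | TAll B => TAll (open_rec (S k) u B)
  | TArr B C => TArr (open_rec k u B) (open_rec k u C)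
  | _ => A
  end.
Definition open (A u : typ) : typ := open_rec 0 u A.

Inductive mono : typ -> Prop :=
| mono_unit : mono TUnit
| mono_var  : forall a, mono (TFVar a)
| mono_ex   : forall a, mono (TEx a)
| mono_arr  : forall t1 t2, mono t1 -> mono t2 -> mono (TArr t1 t2).

Fixpoint names_typ (A : typ) : list nat :=
  match A with
  | TFVar a => [a]
  | TEx a => [a]
  | TAll B => names_typ B
  | TArr B C => names_typ B ++ names_typ C
  | _ => []
  end.

Fixpoint evars_typ (A : typ) : list nat :=
  match A with
  | TEx a => [a]
  | TAll B => evars_typ B
  | TArr B C => evars_typ B ++ evars_typ C
  | _ => []
  end.

Fixpoint subst_ex (a : nat) (t : typ) (A : typ) : typ :=
  match A with
  | TEx b => if Nat.eqb a b then t else TEx b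
  | TAll B => TAll (subst_ex a t B)
  | TArr B C => TArr (subst_ex a t B) (subst_ex a t C)
  | _ => A
  end.

(* Context entries; contexts are lists written left to right,
   so "Gamma, e" is [Gamma ++ [e]]. *)
Inductive entry : Type :=
| CVar    : nat -> entry
| CTm     : nat -> typ -> entry
| CEx     : nat -> entry
| CSolved : nat -> typ -> entry
| CMark   : nat -> entry.

Definition ctx := list entry.

Definition dom_entry (e : entry) : list nat :=
  match e with
  | CVar a | CTm a _ | CEx a | CSolved a _ => [a]
  | CMark _ => []
  end.
Definition dom (G : ctx) : list nat := flat_map dom_entry G.

Definition marks (G : ctx) : list nat :=
  flat_map (fun e => match e with CMark a => [a] | _ => [] end) G.

Definition names_entry (e : entry) : list nat :=
  match e with
  | CVar a | CEx a | CMark a => [a]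
  | CTm a A | CSolved a A => a :: names_typ A
  end.
Definition names_ctx (G : ctx) : list nat := flat_map names_entry G.

Definition ex_declared (G : ctx) (a : nat) : Prop :=
  In (CEx a) G \/ exists t, In (CSolved a t) G.

Inductive wf_typ : ctx -> typ -> Prop :=
| wf_unit : forall G, wf_typ G TUnit
| wf_var  : forall G a, In (CVar a) G -> wf_typ G (TFVar a)
| wf_ex   : forall G a, ex_declared G a -> wf_typ G (TEx a)
| wf_arr  : forall G A B, wf_typ G A -> wf_typ G B -> wf_typ G (TArr A B)
| wf_all  : forall G A,
    (forall a, ~ In a (names_ctx G) -> wf_typ (G ++ [CVar a]) (open A (TFVar a))) ->
    wf_typ G (TAll A).

Inductive wf_ctx : ctx -> Prop :=
| wfc_nil  : wf_ctx []
| wfc_var  : forall G a, wf_ctx G -> ~ In a (dom G) -> wf_ctx (G ++ [CVar a])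
| wfc_tm   : forall G x A, wf_ctx G -> ~ In x (dom G) -> wf_typ G A ->
               wf_ctx (G ++ [CTm x A])
| wfc_ex   : forall G a, wf_ctx G -> ~ In a (dom G) -> wf_ctx (G ++ [CEx a])
| wfc_sol  : forall G a t, wf_ctx G -> ~ In a (dom G) -> mono t -> wf_typ G t ->
               wf_ctx (G ++ [CSolved a t])
| wfc_mark : forall G a, wf_ctx G -> ~ In a (dom G) -> ~ In a (marks G) ->
               wf_ctx (G ++ [CMark a]).

Definition decl_entry (e : entry) : Prop :=
  match e with CVar _ | CTm _ _ => True | _ => False end.
Definition decl_ctx (G : ctx) : Prop := Forall decl_entry G.

(* context application [G]A : the rightmost solution is substituted first,
   then the prefix is applied (solutions only mention earlier variables). *)
Definition ctx_apply (G : ctx) (A : typ) : typ :=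
  fold_right (fun e B => match e with
                         | CSolved a t => subst_ex a t B
                         | _ => B end) A G.

Inductive dsub : ctx -> typ -> typ -> Prop :=
| ds_var  : forall P a, In (CVar a) P -> dsub P (TFVar a) (TFVar a)
| ds_unit : forall P, dsub P TUnit TUnit
| ds_arr  : forall P A1 A2 B1 B2,
    dsub P B1 A1 -> dsub P A2 B2 -> dsub P (TArr A1 A2) (TArr B1 B2)
| ds_allL : forall P A B t,
    mono t -> wf_typ P t -> dsub P (open A t) B -> dsub P (TAll A) B
| ds_allR : forall P A B b,
    ~ In b (names_ctx P) -> ~ In b (names_typ A) -> ~ In b (names_typ B) ->
    dsub (P ++ [CVar b]) A (open B (TFVar b)) -> dsub P A (TAll B).

Definition fresh (a : nat) (G : ctx) (Ts : list typ) : Prop :=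
  ~ In a (names_ctx G) /\ Forall (fun T => ~ In a (names_typ T)) Ts.

(* Algorithmic subtyping  G |- A <: B -| D, and instantiation
   inst_l G a A D :  G |- a^ :<= A -| D
   inst_r G A a D :  G |- A <=: a^ -| D *)
Inductive asub : ctx -> typ -> typ -> ctx -> Prop :=
| as_var  : forall G a, In (CVar a) G -> asub G (TFVar a) (TFVar a) G
| as_unit : forall G, asub G TUnit TUnit G
| as_ex   : forall G a, In (CEx a) G -> asub G (TEx a) (TEx a) G
| as_arr  : forall G T D A1 A2 B1 B2,
    asub G B1 A1 T ->
    asub T (ctx_apply T A2) (ctx_apply T B2) D ->
    asub G (TArr A1 A2) (TArr B1 B2) D
| as_allL : forall G A B D Th a,
    fresh a G [A; B] ->
    asub (G ++ [CMark a; CEx a]) (open A (TEx a)) B (D ++ CMark a :: Th) ->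
    asub G (TAll A) B D
| as_allR : forall G A B D Th a,
    fresh a G [A; B] ->
    asub (G ++ [CVar a]) A (open B (TFVar a)) (D ++ CVar a :: Th) ->
    asub G A (TAll B) D
| as_instL : forall G a A D,
    In (CEx a) G -> ~ In a (evars_typ A) -> inst_l G a A D ->
    asub G (TEx a) A D
| as_instR : forall G a A D,
    In (CEx a) G -> ~ In a (evars_typ A) -> inst_r G A a D ->
    asub G A (TEx a) D
with inst_l : ctx -> nat -> typ -> ctx -> Prop :=
| il_solve : forall G1 G2 a t,
    mono t -> wf_typ G1 t ->
    inst_l (G1 ++ CEx a :: G2) a t (G1 ++ CSolved a t :: G2)
| il_reach : forall G1 G2 G3 a b,
    inst_l (G1 ++ CEx a :: G2 ++ CEx b :: G3) a (TEx b)
           (G1 ++ CEx a :: G2 ++ CSolved b (TEx a) :: G3)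
| il_arr : forall G1 G2 a a1 a2 A1 A2 Th D,
    a1 <> a2 ->
    fresh a1 (G1 ++ CEx a :: G2) [A1; A2] ->
    fresh a2 (G1 ++ CEx a :: G2) [A1; A2] ->
    inst_r (G1 ++ CEx a2 :: CEx a1 :: CSolved a (TArr (TEx a1) (TEx a2)) :: G2)
           A1 a1 Th ->
    inst_l Th a2 (ctx_apply Th A2) D ->
    inst_l (G1 ++ CEx a :: G2) a (TArr A1 A2) D
| il_allR : forall G a B b D D',
    In (CEx a) G -> fresh b G [B] ->
    inst_l (G ++ [CVar b]) a (open B (TFVar b)) (D ++ CVar b :: D') ->
    inst_l G a (TAll B) D
with inst_r : ctx -> typ -> nat -> ctx -> Prop :=
| ir_solve : forall G1 G2 a t,
    mono t -> wf_typ G1 t ->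
    inst_r (G1 ++ CEx a :: G2) t a (G1 ++ CSolved a t :: G2)
| ir_reach : forall G1 G2 G3 a b,
    inst_r (G1 ++ CEx a :: G2 ++ CEx b :: G3) (TEx b) a
           (G1 ++ CEx a :: G2 ++ CSolved b (TEx a) :: G3)
| ir_arr : forall G1 G2 a a1 a2 A1 A2 Th D,
    a1 <> a2 ->
    fresh a1 (G1 ++ CEx a :: G2) [A1; A2] ->
    fresh a2 (G1 ++ CEx a :: G2) [A1; A2] ->
    inst_l (G1 ++ CEx a2 :: CEx a1 :: CSolved a (TArr (TEx a1) (TEx a2)) :: G2)
           a1 A1 Th ->
    inst_r Th (ctx_apply Th A2) a2 D ->
    inst_r (G1 ++ CEx a :: G2) (TArr A1 A2) a D
| ir_allL : forall G a B b D D',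
    In (CEx a) G -> fresh b G [B] ->
    inst_r (G ++ [CMark b; CEx b]) (open B (TEx b)) a (D ++ CMark b :: D') ->
    inst_r G (TAll B) a D.

From Stdlib Require Import List Arith Lia.
Import ListNotations.

(* Soundness is proved for arbitrary well-ordered algorithmic contexts, by mutual
   induction on subtyping and instantiation: if G |- A <: B -| D, then D extends G
   (same universal variables, term variables and markers, in the same order, and
   the same solutions), and for every instantiation s of the existential variables
   by ground monotypes that respects the solutions of D, the declarative part of G
   derives [s]A <= [s]B.  At a scope exit the instantiation of the output context is
   extended to the discarded tail; in the forall-left rule the instance it assigns to
   the fresh existential is the declarative witness.  A declarative context has no
   existential variables, so any such s fixes A and B. *)

(** * Instantiating existential variables *)

Fixpoint uvars_typ (A : typ) : list nat :=
  match A with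
  | TFVar a => [a]
  | TAll B => uvars_typ B
  | TArr B C => uvars_typ B ++ uvars_typ C
  | _ => []
  end.

Fixpoint esubst (s : nat -> typ) (A : typ) : typ :=
  match A with
  | TEx a => s a
  | TAll B => TAll (esubst s B)
  | TArr B C => TArr (esubst s B) (esubst s C)
  | _ => A
  end.

Definition update (s : nat -> typ) (a : nat) (v : typ) : nat -> typ :=
  fun y => if Nat.eqb y a then v else s y.

Lemma esubst_ext (s s' : nat -> typ) (A : typ) :
  (forall x, In x (evars_typ A) -> s x = s' x) -> esubst s A = esubst s' A.
Proof.
  induction A; simpl; intros H; try reflexivity.
  - apply H; left; reflexivity.
  - rewrite IHA; auto.
  - rewrite IHA1, IHA2; auto; intros x Hx; apply H, in_or_app; auto.
Qed.

Lemma esubst_update_fresh (s : nat -> typ) (a : nat) (v A : typ) :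
  ~ In a (evars_typ A) -> esubst (update s a v) A = esubst s A.
Proof.
  intros Ha; apply esubst_ext; intros x Hx; unfold update.
  destruct (Nat.eqb_spec x a); [subst; contradiction|reflexivity].
Qed.

Lemma open_rec_mono (t u : typ) (k : nat) : mono t -> open_rec k u t = t.
Proof. intros Hm; induction Hm; simpl; congruence. Qed.

Lemma esubst_open_rec (s : nat -> typ) (A u : typ) (k : nat) :
  (forall x, mono (s x)) ->
  esubst s (open_rec k u A) = open_rec k (esubst s u) (esubst s A).
Proof.
  intros Hs; revert k; induction A; intros k; simpl.
  - reflexivity.
  - destruct (Nat.eqb n k); reflexivity.
  - reflexivity.
  - rewrite open_rec_mono; auto.
  - rewrite IHA; reflexivity.
  - rewrite IHA1, IHA2; reflexivity.
Qed.

Lemma esubst_open (s : nat -> typ) (A u : typ) :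
  (forall x, mono (s x)) -> esubst s (open A u) = open (esubst s A) (esubst s u).
Proof. apply esubst_open_rec. Qed.

Lemma evars_open_rec (A u : typ) (k x : nat) :
  In x (evars_typ (open_rec k u A)) -> In x (evars_typ A) \/ In x (evars_typ u).
Proof.
  revert k; induction A; intros k H; simpl in *; auto.
  - destruct (Nat.eqb n k); simpl in H; auto.
  - eapply IHA; eauto.
  - rewrite in_app_iff in *; destruct H as [H|H].
    + destruct (IHA1 _ H); auto.
    + destruct (IHA2 _ H); auto.
Qed.

Lemma evars_open (A u : typ) (x : nat) :
  In x (evars_typ (open A u)) -> In x (evars_typ A) \/ In x (evars_typ u).
Proof. apply evars_open_rec. Qed.

Lemma evars_esubst (s : nat -> typ) (A : typ) (y : nat) :
  In y (evars_typ (esubst s A)) -> exists x, In y (evars_typ (s x)).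
Proof.
  induction A; simpl; intros H; try contradiction; eauto.
  rewrite in_app_iff in H; destruct H; auto.
Qed.

Lemma uvars_esubst (s : nat -> typ) (A : typ) (y : nat) :
  In y (uvars_typ (esubst s A)) -> In y (uvars_typ A) \/ exists x, In y (uvars_typ (s x)).
Proof.
  induction A; simpl; intros H; eauto.
  rewrite in_app_iff in *; destruct H as [H|H].
  - destruct (IHA1 H); auto.
  - destruct (IHA2 H); auto.
Qed.

Lemma names_esubst (s : nat -> typ) (A : typ) (y : nat) :
  In y (names_typ (esubst s A)) -> In y (names_typ A) \/ exists x, In y (names_typ (s x)).
Proof.
  induction A; simpl; intros H; eauto.
  rewrite in_app_iff in *; destruct H as [H|H].
  - destruct (IHA1 H); auto.
  - destruct (IHA2 H); auto.
Qed.

Lemma names_no_evars (t : typ) (y : nat) :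
  evars_typ t = [] -> In y (names_typ t) -> In y (uvars_typ t).
Proof.
  induction t; simpl; intros He H; auto; try discriminate.
  apply app_eq_nil in He; destruct He.
  rewrite in_app_iff in *; destruct H; auto.
Qed.

Lemma mono_esubst (s : nat -> typ) (t : typ) :
  (forall x, mono (s x)) -> mono t -> mono (esubst s t).
Proof. intros Hs Hm; induction Hm; simpl; try constructor; auto. Qed.

Lemma esubst_closed (s : nat -> typ) (A : typ) : evars_typ A = [] -> esubst s A = A.
Proof.
  induction A; simpl; intros H; auto; try discriminate.
  - rewrite IHA; auto.
  - apply app_eq_nil in H; destruct H; rewrite IHA1, IHA2; auto.
Qed.

Lemma evars_subst_ex (a : nat) (t B : typ) (y : nat) :
  In y (evars_typ (subst_ex a t B)) -> In y (evars_typ B) \/ In y (evars_typ t).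
Proof.
  induction B; simpl; intros H; auto.
  - destruct (Nat.eqb a n); simpl in H; auto.
  - rewrite in_app_iff in *; destruct H as [H|H].
    + destruct (IHB1 H); auto.
    + destruct (IHB2 H); auto.
Qed.

Lemma esubst_subst_ex (s : nat -> typ) (a : nat) (t B : typ) :
  s a = esubst s t -> esubst s (subst_ex a t B) = esubst s B.
Proof.
  intros H; induction B; simpl; try reflexivity.
  - destruct (Nat.eqb_spec a n); [subst; auto|reflexivity].
  - rewrite IHB; reflexivity.
  - rewrite IHB1, IHB2; reflexivity.
Qed.

Lemma evars_ctx_apply (G : ctx) (A : typ) (S : list nat) :
  (forall x t, In (CSolved x t) G -> incl (evars_typ t) S) ->
  incl (evars_typ A) S -> incl (evars_typ (ctx_apply G A)) S.
Proof.
  induction G as [|e G IH]; intros HG HA; simpl; auto.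
  assert (H : incl (evars_typ (ctx_apply G A)) S)
    by (apply IH; auto; intros x t Hx; apply (HG x t); right; exact Hx).
  destruct e; auto.
  intros z Hz; apply evars_subst_ex in Hz; destruct Hz as [Hz|Hz]; auto.
  apply (HG n t); simpl; auto.
Qed.

Lemma esubst_ctx_apply (s : nat -> typ) (G : ctx) (A : typ) :
  (forall x t, In (CSolved x t) G -> s x = esubst s t) ->
  esubst s (ctx_apply G A) = esubst s A.
Proof.
  induction G as [|e G IH]; intros HG; simpl; auto.
  assert (IH' : esubst s (ctx_apply G A) = esubst s A)
    by (apply IH; intros x t Hx; apply HG; right; exact Hx).
  destruct e; auto.
  rewrite esubst_subst_ex; auto. apply HG; left; reflexivity.
Qed.

Lemma evars_open_rec_incl (A u : typ) (k : nat) :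
  incl (evars_typ A) (evars_typ (open_rec k u A)).
Proof.
  revert k; induction A; intros k x H; simpl in *; try tauto.
  - apply (IHA (S k) x H).
  - rewrite in_app_iff in *; destruct H; [left; apply (IHA1 k)|right; apply (IHA2 k)]; exact H.
Qed.

Definition skel_entry (e : entry) : ctx :=
  match e with CVar _ | CTm _ _ | CMark _ => [e] | _ => [] end.
Definition skel (G : ctx) : ctx := flat_map skel_entry G.

Definition decl_part_entry (e : entry) : ctx :=
  match e with CVar _ | CTm _ _ => [e] | _ => [] end.
Definition decl_part (G : ctx) : ctx := flat_map decl_part_entry G.

Lemma dom_app (G H : ctx) : dom (G ++ H) = dom G ++ dom H.
Proof. apply flat_map_app. Qed.

Lemma skel_app (G H : ctx) : skel (G ++ H) = skel G ++ skel H.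
Proof. apply flat_map_app. Qed.

Lemma decl_part_app (G H : ctx) : decl_part (G ++ H) = decl_part G ++ decl_part H.
Proof. apply flat_map_app. Qed.

Lemma decl_part_skel (G : ctx) : decl_part (skel G) = decl_part G.
Proof.
  induction G as [|e G IH]; [reflexivity|].
  change (decl_part (skel_entry e ++ skel G) = decl_part_entry e ++ decl_part G).
  rewrite decl_part_app, IH; destruct e; reflexivity.
Qed.

Lemma decl_part_of_decl (G : ctx) : decl_ctx G -> decl_part G = G.
Proof.
  induction G as [|e G IH]; intros Hd; [reflexivity|].
  inversion Hd as [|? ? He HG]; subst.
  change (decl_part_entry e ++ decl_part G = e :: G).
  rewrite IH by exact HG; destruct e; simpl in He; tauto || reflexivity.
Qed.

Lemma In_CVar_skel (G : ctx) (y : nat) : In (CVar y) (skel G) <-> In (CVar y) G.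
Proof.
  unfold skel; rewrite in_flat_map; split.
  - intros [e [He H]]; destruct e; simpl in H; try contradiction;
      destruct H as [H|[]]; inversion H; subst; exact He.
  - intros H; exists (CVar y); simpl; auto.
Qed.

Lemma In_skel (G : ctx) (e : entry) : In e (skel G) -> In e G.
Proof.
  unfold skel; rewrite in_flat_map; intros [e' [He H]].
  destruct e'; simpl in H; try contradiction; destruct H as [H|[]]; subst; exact He.
Qed.

Lemma In_CVar_decl_part (G : ctx) (y : nat) : In (CVar y) G -> In (CVar y) (decl_part G).
Proof. intros H; apply in_flat_map; exists (CVar y); simpl; auto. Qed.

Lemma In_names_ctx (G : ctx) (e : entry) (x : nat) :
  In e G -> In x (names_entry e) -> In x (names_ctx G).
Proof. intros H1 H2; apply in_flat_map; eauto. Qed.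

Lemma In_dom (G : ctx) (e : entry) (x : nat) : In e G -> In x (dom_entry e) -> In x (dom G).
Proof. intros H1 H2; apply in_flat_map; eauto. Qed.

Lemma dom_names_ctx (G : ctx) (x : nat) : In x (dom G) -> In x (names_ctx G).
Proof.
  unfold dom; rewrite in_flat_map; intros [e [He H]].
  apply (In_names_ctx _ e); auto; destruct e; simpl in *; tauto.
Qed.

Lemma names_ctx_decl_part (G : ctx) (x : nat) :
  In x (names_ctx (decl_part G)) -> In x (names_ctx G).
Proof.
  unfold names_ctx at 1; rewrite in_flat_map; intros [e [He H]].
  unfold decl_part in He; rewrite in_flat_map in He; destruct He as [e' [He' H']].
  destruct e'; simpl in H'; try contradiction; destruct H' as [H'|[]]; subst;
    eapply In_names_ctx; eauto.
Qed.

Lemma ex_declared_dom (G : ctx) (a : nat) : ex_declared G a -> In a (dom G).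
Proof.
  intros [H|[t H]]; eapply In_dom; eauto; simpl; auto.
Qed.

Lemma names_ex_declared (G : ctx) (a b : nat) :
  ex_declared G a -> ~ In b (names_ctx G) -> ~ In b (names_typ (TEx a)).
Proof.
  intros Ha Hb [H|[]]; subst; apply Hb, dom_names_ctx, ex_declared_dom; exact Ha.
Qed.

Lemma fresh_ctx (a : nat) (G : ctx) (Ts : list typ) : fresh a G Ts -> ~ In a (names_ctx G).
Proof. intros [H _]; exact H. Qed.

Lemma fresh_typ (a : nat) (G : ctx) (Ts : list typ) (T : typ) :
  fresh a G Ts -> In T Ts -> ~ In a (names_typ T).
Proof. intros [_ H] HT; rewrite Forall_forall in H; auto. Qed.

Lemma list_max_S_notin (l : list nat) : ~ In (S (list_max l)) l.
Proof.
  intros H. assert (Hle := proj1 (list_max_le l (list_max l)) (le_n _)).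
  rewrite Forall_forall in Hle; specialize (Hle _ H); lia.
Qed.

Lemma wf_typ_evars (G : ctx) (A : typ) (x : nat) :
  wf_typ G A -> In x (evars_typ A) -> ex_declared G x.
Proof.
  intros Hw; induction Hw; simpl; intros Hx; try contradiction.
  - destruct Hx as [Hx|[]]; subst; exact H.
  - rewrite in_app_iff in Hx; destruct Hx; auto.
  - set (a := S (list_max (names_ctx G))).
    destruct (H0 a (list_max_S_notin _)) as [Hx'|[t Hx']].
    + eapply evars_open_rec_incl; eauto.
    + rewrite in_app_iff in Hx'; destruct Hx' as [Hx'|[Hx'|[]]]; [left; exact Hx'|discriminate].
    + rewrite in_app_iff in Hx'; destruct Hx' as [Hx'|[Hx'|[]]]; [right; eauto|discriminate].
Qed.

(** * Well-ordered contexts *)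

Definition mono_over (p : ctx) (t : typ) : Prop :=
  mono t /\ incl (evars_typ t) (dom p) /\ (forall y, In y (uvars_typ t) -> In (CVar y) p).

Definition entry_ok (p : ctx) (e : entry) : Prop :=
  (forall x, In x (dom_entry e) -> ~ In x (dom p)) /\
  match e with CSolved _ t => mono_over p t | _ => True end.

Fixpoint ordered_after (p G : ctx) : Prop :=
  match G with
  | [] => True
  | e :: G' => entry_ok p e /\ ordered_after (p ++ [e]) G'
  end.

Definition ordered_ctx (G : ctx) : Prop := ordered_after [] G.

Lemma ordered_after_app (p L R : ctx) :
  ordered_after p (L ++ R) <-> ordered_after p L /\ ordered_after (p ++ L) R.
Proof.
  revert p; induction L as [|e L IH]; intros p; simpl.
  - rewrite app_nil_r; tauto.
  - rewrite IH, <- app_assoc; simpl; tauto.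
Qed.

Lemma ordered_ctx_app (L R : ctx) : ordered_ctx (L ++ R) <-> ordered_ctx L /\ ordered_after L R.
Proof. unfold ordered_ctx; rewrite ordered_after_app; simpl; tauto. Qed.

Lemma ordered_after_disjoint (p R : ctx) (x : nat) :
  ordered_after p R -> In x (dom p) -> ~ In x (dom R).
Proof.
  revert p; induction R as [|e R IH]; simpl; intros p H Hx Hin; [exact Hin|].
  destruct H as [[Hfresh _] HR]; unfold dom in Hin; simpl in Hin; rewrite in_app_iff in Hin.
  destruct Hin as [Hin|Hin].
  - exact (Hfresh x Hin Hx).
  - apply (IH _ HR); auto; rewrite dom_app; apply in_or_app; auto.
Qed.

Lemma mono_over_weaken (p p' : ctx) (t : typ) :
  incl (dom p) (dom p') -> (forall y, In (CVar y) p -> In (CVar y) p') ->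
  mono_over p t -> mono_over p' t.
Proof. intros Hd Hv [Hm [He Hu]]; repeat split; auto; intros z Hz; auto. Qed.

Lemma mono_over_app (p q : ctx) (t : typ) : mono_over p t -> mono_over (p ++ q) t.
Proof.
  apply mono_over_weaken; intros z Hz; [rewrite dom_app|]; apply in_or_app; auto.
Qed.

Lemma ordered_after_solved (p G : ctx) (x : nat) (t : typ) :
  ordered_after p G -> In (CSolved x t) G -> mono_over (p ++ G) t.
Proof.
  revert p; induction G as [|e G IH]; simpl; intros p H Hin; [contradiction|].
  destruct H as [[_ He] HG]; destruct Hin as [Hin|Hin].
  - subst; apply mono_over_app; exact He.
  - specialize (IH _ HG Hin); rewrite <- app_assoc in IH; exact IH.
Qed.

Lemma ordered_solved (G : ctx) (x : nat) (t : typ) :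
  ordered_ctx G -> In (CSolved x t) G -> mono_over G t.
Proof. intros H Hin; exact (ordered_after_solved [] G x t H Hin). Qed.

Lemma ordered_after_weaken (p p' R : ctx) :
  ordered_after p R -> incl (dom p) (dom p') ->
  (forall y, In (CVar y) p -> In (CVar y) p') ->
  (forall x, In x (dom p') -> ~ In x (dom p) -> ~ In x (dom R)) -> ordered_after p' R.
Proof.
  revert p p'; induction R as [|e R IH]; simpl; intros p p' H Hd Hv Hn; auto.
  destruct H as [[Hfresh He] HR]; split; [split|].
  - intros x Hx Hx'; destruct (in_dec Nat.eq_dec x (dom p)) as [Hp|Hp].
    + exact (Hfresh x Hx Hp).
    + apply (Hn x Hx' Hp); unfold dom; simpl; apply in_or_app; auto.
  - destruct e; auto; eapply mono_over_weaken; eauto.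
  - apply (IH (p ++ [e])); auto.
    + intros z; rewrite !dom_app, !in_app_iff; intros [Hz|Hz]; auto.
    + intros y; rewrite !in_app_iff; intros [Hy|Hy]; auto.
    + intros x; rewrite !dom_app, !in_app_iff; intros [Hx|Hx] Hx' Hr; apply Hx'; auto.
      destruct (in_dec Nat.eq_dec x (dom p)) as [Hp|Hp]; auto.
      exfalso; apply (Hn x Hx Hp); unfold dom; simpl; apply in_or_app; auto.
Qed.

Lemma ordered_ex_fresh (L R : ctx) (a : nat) :
  ordered_ctx (L ++ CEx a :: R) -> ~ In a (dom L).
Proof.
  intros H; apply ordered_ctx_app in H; destruct H as [_ [[H _] _]]; apply H; left; reflexivity.
Qed.

Lemma ordered_snoc_var (G : ctx) (a : nat) :
  ordered_ctx G -> ~ In a (names_ctx G) -> ordered_ctx (G ++ [CVar a]).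
Proof.
  intros H Ha; apply ordered_ctx_app; repeat split; auto.
  intros x [Hx|[]] Hin; subst; apply Ha, dom_names_ctx, Hin.
Qed.

Lemma ordered_snoc_mark_ex (G : ctx) (a : nat) :
  ordered_ctx G -> ~ In a (names_ctx G) -> ordered_ctx (G ++ [CMark a; CEx a]).
Proof.
  intros H Ha; apply ordered_ctx_app; simpl; repeat split; auto.
  intros x [Hx|[]] Hin; subst; rewrite dom_app, in_app_iff in Hin.
  destruct Hin as [Hin|[]]; apply Ha, dom_names_ctx, Hin.
Qed.

Lemma mono_over_of_wf (G : ctx) (t : typ) : mono t -> wf_typ G t -> mono_over G t.
Proof.
  intros Hm Hw; split; [exact Hm|split].
  - intros x Hx; apply ex_declared_dom; eapply wf_typ_evars; eauto.
  - revert Hw; induction Hm; simpl; intros Hw y Hy; try contradiction.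
    + destruct Hy as [Hy|[]]; subst; inversion Hw; auto.
    + inversion Hw; subst; rewrite in_app_iff in Hy; destruct Hy; auto.
Qed.

Lemma ordered_of_wf_ctx (G : ctx) : wf_ctx G -> ordered_ctx G.
Proof.
  intros H; induction H; [exact I|..]; apply ordered_ctx_app;
    (split; [assumption|split; [split|exact I]]); simpl;
    try (intros z [Hz|[]]; subst; assumption); try (intros z []); try exact I.
  apply mono_over_of_wf; auto.
Qed.

(** * Context extension and ground instantiations *)

Fixpoint skel_before (G : ctx) (x : nat) : option ctx :=
  match G with
  | [] => None
  | e :: G' =>
      if in_dec Nat.eq_dec x (dom_entry e) then Some []
      else match skel_before G' x with
           | Some l => Some (skel_entry e ++ l)
           | None => None
           end
  end.

Lemma skel_before_app (L R : ctx) (x : nat) :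
  skel_before (L ++ R) x =
  match skel_before L x with
  | Some l => Some l
  | None => match skel_before R x with Some l => Some (skel L ++ l) | None => None end
  end.
Proof.
  induction L as [|e L IH]; simpl.
  - destruct (skel_before R x); reflexivity.
  - destruct (in_dec Nat.eq_dec x (dom_entry e)); [reflexivity|].
    rewrite IH; destruct (skel_before L x); [reflexivity|].
    destruct (skel_before R x); [|reflexivity].
    rewrite app_assoc; reflexivity.
Qed.

Lemma skel_before_Some (G : ctx) (x : nat) (l : ctx) :
  skel_before G x = Some l -> In x (dom G) /\ incl l (skel G).
Proof.
  revert l; induction G as [|e G IH]; simpl; intros l H; [discriminate|].
  unfold dom, skel; simpl; fold (dom G) (skel G).
  destruct (in_dec Nat.eq_dec x (dom_entry e)) as [Hi|Hi].
  - inversion H; subst; split; [apply in_or_app; auto|intros z []].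
  - destruct (skel_before G x) as [l'|] eqn:E; [|discriminate]; inversion H; subst.
    destruct (IH _ eq_refl) as [H1 H2]; split; [apply in_or_app; auto|].
    intros z; rewrite !in_app_iff; intros [Hz|Hz]; auto.
Qed.

Lemma skel_before_dom (G : ctx) (x : nat) : In x (dom G) -> exists l, skel_before G x = Some l.
Proof.
  induction G as [|e G IH]; simpl; intros H; [contradiction|].
  unfold dom in H; simpl in H; fold (dom G) in H.
  destruct (in_dec Nat.eq_dec x (dom_entry e)) as [Hi|Hi]; eauto.
  rewrite in_app_iff in H; destruct H as [H|H]; [contradiction|].
  destruct (IH H) as [l E]; rewrite E; eauto.
Qed.

Definition ground_mono (P : ctx) (t : typ) : Prop :=
  mono t /\ evars_typ t = [] /\ (forall y, In y (uvars_typ t) -> In (CVar y) P).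

Lemma ground_mono_weaken (P Q : ctx) (t : typ) :
  (forall y, In (CVar y) P -> In (CVar y) Q) -> ground_mono P t -> ground_mono Q t.
Proof. intros HPQ [Hm [He Hu]]; repeat split; auto. Qed.

Lemma dsub_refl_ground (P : ctx) (t : typ) : ground_mono P t -> dsub P t t.
Proof.
  intros [Hm [He Hu]]; induction Hm; simpl in *.
  - constructor.
  - constructor; auto.
  - discriminate.
  - apply app_eq_nil in He; destruct He.
    constructor; [apply IHHm1|apply IHHm2]; auto; intros y Hy; apply Hu, in_or_app; auto.
Qed.

Lemma wf_typ_ground (P : ctx) (t : typ) : ground_mono P t -> wf_typ P t.
Proof.
  intros [Hm [He Hu]]; induction Hm; simpl in *.
  - constructor.
  - constructor; auto.
  - discriminate.
  - apply app_eq_nil in He; destruct He.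
    constructor; [apply IHHm1|apply IHHm2]; auto; intros y Hy; apply Hu, in_or_app; auto.
Qed.

Record ground_sol (s : nat -> typ) (D : ctx) : Prop := {
  gs_ground : forall x, ground_mono D (s x);
  gs_solved : forall x t, In (CSolved x t) D -> s x = esubst s t }.

Lemma ground_mono_esubst (s : nat -> typ) (D P : ctx) (A : typ) :
  ground_sol s D -> (forall y, In (CVar y) D -> In (CVar y) P) ->
  mono A -> (forall y, In y (uvars_typ A) -> In (CVar y) P) -> ground_mono P (esubst s A).
Proof.
  intros Hs HDP Hm Hu; split; [|split].
  - apply mono_esubst; auto; intros x; apply (gs_ground _ _ Hs x).
  - destruct (evars_typ (esubst s A)) as [|y l] eqn:E; [reflexivity|exfalso].
    destruct (evars_esubst s A y) as [x Hx]; [rewrite E; left; reflexivity|].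
    destruct (gs_ground _ _ Hs x) as [_ [Hx' _]]; rewrite Hx' in Hx; exact Hx.
  - intros y Hy; apply uvars_esubst in Hy; destruct Hy as [Hy|[x Hy]]; auto.
    apply HDP, (gs_ground _ _ Hs x); exact Hy.
Qed.

(* [ext_before] keeps every variable of [G] to the left of any marker pushed after
   it, so that closing a scope never discards part of [G]. *)
Record ctx_ext (G D : ctx) : Prop := {
  ext_ordered : ordered_ctx D;
  ext_skel : skel D = skel G;
  ext_before : forall x l, skel_before G x = Some l -> skel_before D x = Some l;
  ext_solved : forall x t, In (CSolved x t) G -> In (CSolved x t) D }.

Lemma ctx_ext_refl (G : ctx) : ordered_ctx G -> ctx_ext G G.
Proof. intros H; split; auto. Qed.

Lemma ctx_ext_trans (G T D : ctx) : ctx_ext G T -> ctx_ext T D -> ctx_ext G D.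
Proof.
  intros [H1 H2 H3 H4] [K1 K2 K3 K4]; split; auto; congruence.
Qed.

Lemma ext_dom (G D : ctx) (x : nat) : ctx_ext G D -> In x (dom G) -> In x (dom D).
Proof.
  intros O Hx; destruct (skel_before_dom G x Hx) as [l E].
  apply (skel_before_Some D x l), (ext_before _ _ O), E.
Qed.

Lemma ext_CVar (G D : ctx) (y : nat) : ctx_ext G D -> In (CVar y) D -> In (CVar y) G.
Proof.
  intros O H; apply In_CVar_skel; rewrite <- (ext_skel _ _ O); apply In_CVar_skel, H.
Qed.

Lemma ext_decl_part (G D : ctx) : ctx_ext G D -> decl_part D = decl_part G.
Proof.
  intros O; rewrite <- (decl_part_skel D), <- (decl_part_skel G), (ext_skel _ _ O); reflexivity.
Qed.

Lemma ground_sol_ext (s : nat -> typ) (T D : ctx) :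
  ctx_ext T D -> ground_sol s D -> ground_sol s T.
Proof.
  intros O [Hg Hs]; split.
  - intros x; apply (ground_mono_weaken D); auto; intros y; apply ext_CVar, O.
  - intros x t H; apply Hs, (ext_solved _ _ O), H.
Qed.

Lemma esubst_ctx_apply_ext (s : nat -> typ) (T D : ctx) (A : typ) :
  ctx_ext T D -> ground_sol s D -> esubst s (ctx_apply T A) = esubst s A.
Proof. intros O Hs; apply esubst_ctx_apply, (gs_solved _ _ (ground_sol_ext _ _ _ O Hs)). Qed.

Lemma evars_ctx_apply_ext (G T : ctx) (A : typ) :
  ctx_ext G T -> incl (evars_typ A) (dom G) -> incl (evars_typ (ctx_apply T A)) (dom T).
Proof.
  intros O HA; apply evars_ctx_apply.
  - intros x t Hx; apply (ordered_solved _ _ _ (ext_ordered _ _ O) Hx).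
  - intros z Hz; apply (ext_dom G); auto.
Qed.

Lemma ground_sol_snoc (s : nat -> typ) (Pre : ctx) (e : entry) :
  ground_sol s Pre -> (forall x t, e = CSolved x t -> s x = esubst s t) ->
  ground_sol s (Pre ++ [e]).
Proof.
  intros [Hg Hs] He; split.
  - intros x; apply (ground_mono_weaken Pre); auto; intros y Hy; apply in_or_app; auto.
  - intros x t Hin; apply in_app_or in Hin; destruct Hin as [Hin|[Hin|[]]]; auto.
Qed.

Lemma ground_sol_update (s : nat -> typ) (Pre : ctx) (a : nat) (v : typ) :
  ordered_ctx Pre -> ground_sol s Pre -> ~ In a (dom Pre) -> ground_mono Pre v ->
  ground_sol (update s a v) Pre.
Proof.
  intros Hok [Hg Hs] Ha Hv; split.
  - intros x; unfold update; destruct (Nat.eqb x a); auto.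
  - intros x t Hin; unfold update at 1.
    destruct (Nat.eqb_spec x a) as [E|E].
    + subst; exfalso; apply Ha; eapply In_dom; eauto; left; reflexivity.
    + rewrite (Hs _ _ Hin), esubst_update_fresh; [reflexivity|].
      intros Hat; apply Ha; destruct (ordered_solved _ _ _ Hok Hin) as [_ [Ht _]]; auto.
Qed.

Lemma ground_sol_extend_entry (Pre : ctx) (e : entry) (s : nat -> typ) :
  ordered_ctx Pre -> entry_ok Pre e -> ground_sol s Pre ->
  exists s', ground_sol s' (Pre ++ [e]) /\ forall x, ~ In x (dom_entry e) -> s' x = s x.
Proof.
  intros Hok [Hfresh He] Hs.
  assert (Hupd : forall a v, e = CEx a \/ (exists t, e = CSolved a t /\ v = esubst s t) ->
            ground_mono Pre v -> ground_sol (update s a v) (Pre ++ [e]) /\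
            forall x, ~ In x (dom_entry e) -> update s a v x = s x).
  { intros a v Hea Hv.
    assert (Ha : In a (dom_entry e)) by (destruct Hea as [|[t [E _]]]; subst; left; reflexivity).
    split.
    - apply ground_sol_snoc; [apply ground_sol_update; auto|].
      intros x t E; subst e; destruct Hea as [|[t' [E' Ev]]]; [discriminate|].
      inversion E'; subst; rewrite esubst_update_fresh.
      + unfold update; rewrite Nat.eqb_refl; reflexivity.
      + intros Hat; apply (Hfresh a Ha); destruct He as [_ [Ht _]]; auto.
    - intros x Hx; unfold update; destruct (Nat.eqb_spec x a); [subst; contradiction|reflexivity]. }
  destruct e as [a|a A|a|a t|a].
  - exists s; split; auto; apply ground_sol_snoc; auto; discriminate.
  - exists s; split; auto; apply ground_sol_snoc; auto; discriminate.
  - exists (update s a TUnit); apply Hupd; [left; reflexivity|].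
    repeat split; [constructor|intros y []].
  - exists (update s a (esubst s t)); apply Hupd; [right; eauto|].
    destruct He as [Hm [_ Hu]]; apply (ground_mono_esubst s Pre); auto.
  - exists s; split; auto; apply ground_sol_snoc; auto; discriminate.
Qed.

Lemma ground_sol_extend (Pre Th : ctx) (s : nat -> typ) :
  ordered_ctx (Pre ++ Th) -> ground_sol s Pre ->
  exists s', ground_sol s' (Pre ++ Th) /\ forall x, ~ In x (dom Th) -> s' x = s x.
Proof.
  revert Pre s; induction Th as [|e Th IH]; intros Pre s Hok Hs.
  - exists s; rewrite app_nil_r; auto.
  - assert (Hok' := Hok); apply ordered_ctx_app in Hok'; destruct Hok' as [HPre [He _]].
    destruct (ground_sol_extend_entry Pre e s HPre He Hs) as [s1 [Hs1 Ha1]].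
    assert (Hok2 : ordered_ctx ((Pre ++ [e]) ++ Th)) by (rewrite <- app_assoc; exact Hok).
    destruct (IH _ _ Hok2 Hs1) as [s2 [Hs2 Ha2]].
    exists s2; split.
    + rewrite <- app_assoc in Hs2; exact Hs2.
    + intros x Hx; unfold dom in Hx; simpl in Hx; rewrite in_app_iff in Hx.
      rewrite Ha2, Ha1; auto.
Qed.

Lemma ground_sol_exists (D : ctx) : ordered_ctx D -> exists s, ground_sol s D.
Proof.
  intros H; destruct (ground_sol_extend [] D (fun _ => TUnit)) as [s [Hs _]]; eauto.
  split; [|intros x t []].
  intros x; repeat split; [constructor|intros y []].
Qed.

Lemma ctx_ext_refine_ex (L R M : ctx) (a : nat) :
  ordered_ctx (L ++ CEx a :: R) -> ordered_after L M -> skel M = [] -> In a (dom M) ->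
  (forall x, In x (dom M) -> x <> a -> ~ In x (dom R)) ->
  ctx_ext (L ++ CEx a :: R) (L ++ M ++ R).
Proof.
  intros Hok HM HsM Ha Hn.
  apply ordered_ctx_app in Hok; destruct Hok as [HL [_ HR]].
  split.
  - apply ordered_ctx_app; split; auto; apply ordered_after_app; split; auto.
    apply (ordered_after_weaken (L ++ [CEx a])); auto.
    + intros z; rewrite !dom_app, !in_app_iff; intros [Hz|[Hz|[]]]; subst; auto.
    + intros y; rewrite !in_app_iff; intros [Hy|[Hy|[]]]; [auto|discriminate].
    + intros x; rewrite !dom_app, !in_app_iff; intros [Hx|Hx] Hx'; [exfalso; auto|].
      apply Hn; auto; intros E; subst; apply Hx'; right; left; reflexivity.
  - rewrite !skel_app, HsM; reflexivity.
  - intros x l H; rewrite skel_before_app in H |- *; destruct (skel_before L x); auto.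
    rewrite skel_before_app; cbn [skel_before] in H.
    destruct (in_dec Nat.eq_dec x (dom_entry (CEx a))) as [[E|[]]|Hx]; [subst x|].
    + destruct (skel_before_dom M a Ha) as [l0 E0]; rewrite E0.
      destruct (skel_before_Some M a l0 E0) as [_ Hl0]; rewrite HsM in Hl0.
      destruct l0 as [|z l0]; [exact H|exfalso; apply (Hl0 z); left; reflexivity].
    + destruct (skel_before R x) as [l1|] eqn:E1; [|discriminate].
      destruct (skel_before M x) as [l0|] eqn:E0.
      * exfalso; apply (Hn x); [apply (skel_before_Some M x l0 E0)|..].
        -- intros E; subst; apply Hx; left; reflexivity.
        -- apply (skel_before_Some R x l1 E1).
      * rewrite HsM; exact H.
  - intros x t; rewrite !in_app_iff; intros [H|[H|H]]; auto; discriminate.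
Qed.

Lemma ext_solve (G1 G2 : ctx) (a : nat) (t : typ) :
  ordered_ctx (G1 ++ CEx a :: G2) -> mono t -> wf_typ G1 t ->
  ctx_ext (G1 ++ CEx a :: G2) (G1 ++ CSolved a t :: G2).
Proof.
  intros Hok Hm Hw; apply (ctx_ext_refine_ex G1 G2 [CSolved a t] a); auto.
  - split; [split|exact I]; [|apply mono_over_of_wf; auto].
    intros x [Hx|[]]; subst; apply (ordered_ex_fresh _ _ _ Hok).
  - left; reflexivity.
  - intros x [Hx|[]] Hxa; congruence.
Qed.

Lemma ext_reach (G1 G2 G3 : ctx) (a b : nat) :
  ordered_ctx (G1 ++ CEx a :: G2 ++ CEx b :: G3) ->
  ctx_ext (G1 ++ CEx a :: G2 ++ CEx b :: G3) (G1 ++ CEx a :: G2 ++ CSolved b (TEx a) :: G3).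
Proof.
  rewrite !app_comm_cons, !app_assoc; set (L := G1 ++ CEx a :: G2); intros Hok.
  apply (ctx_ext_refine_ex L G3 [CSolved b (TEx a)] b); auto.
  - repeat split.
    + intros x [Hx|[]]; subst; apply (ordered_ex_fresh _ _ _ Hok).
    + constructor.
    + intros z [Hz|[]]; subst; unfold L; rewrite dom_app, in_app_iff; right; left; reflexivity.
    + intros y [].
  - left; reflexivity.
  - intros x [Hx|[]] Hxb; congruence.
Qed.

Lemma ext_split_arrow (G1 G2 : ctx) (a a1 a2 : nat) :
  a1 <> a2 -> ~ In a1 (names_ctx (G1 ++ CEx a :: G2)) -> ~ In a2 (names_ctx (G1 ++ CEx a :: G2)) ->
  ordered_ctx (G1 ++ CEx a :: G2) ->
  ctx_ext (G1 ++ CEx a :: G2)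
          (G1 ++ CEx a2 :: CEx a1 :: CSolved a (TArr (TEx a1) (TEx a2)) :: G2).
Proof.
  intros Hne Hn1 Hn2 Hok.
  assert (HG : forall x, In x (dom G1) \/ a = x \/ In x (dom G2) ->
             In x (names_ctx (G1 ++ CEx a :: G2))).
  { intros x Hx; apply dom_names_ctx; rewrite dom_app; apply in_or_app.
    unfold dom at 2; simpl; fold (dom G2).
    tauto. }
  assert (Ha := ordered_ex_fresh _ _ _ Hok).
  apply (ctx_ext_refine_ex G1 G2 [CEx a2; CEx a1; CSolved a (TArr (TEx a1) (TEx a2))] a);
    auto; simpl.
  - unfold entry_ok, mono_over; rewrite !dom_app; simpl.
    repeat split; try constructor.
    + intros y [Hy|[]] H; subst; apply Hn2, HG; auto.
    + intros y [Hy|[]]; subst; rewrite in_app_iff; intros [H|[H|[]]];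
        [apply Hn1, HG; auto|congruence].
    + intros y [Hy|[]]; subst; rewrite !in_app_iff; intros [[H|[H|[]]]|[H|[]]];
        [auto|apply Hn2, HG; auto|apply Hn1, HG; auto].
    + constructor.
    + constructor.
    + intros z [Hz|[Hz|[]]]; subst; rewrite !in_app_iff; simpl; auto.
    + intros y [].
  - auto.
  - intros x [Hx|[Hx|[Hx|[]]]] Hxa Hx2; subst; [apply Hn2|apply Hn1|congruence]; apply HG; auto.
Qed.

Lemma app_cons_eq_app_snoc {A : Type} (l1 l2 l3 : list A) (y : A) :
  l1 ++ y :: l2 = l3 ++ [y] -> ~ In y l3 -> l1 = l3.
Proof.
  intros H Hn; destruct l2 as [|z l2] using rev_ind.
  - apply app_inj_tail in H; tauto.
  - exfalso; rewrite app_comm_cons, app_assoc in H; apply app_inj_tail in H.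
    destruct H as [H _]; apply Hn; rewrite <- H; apply in_or_app; right; left; reflexivity.
Qed.

Lemma ext_close_scope (G N D Th : ctx) (m : entry) (b : nat) :
  ctx_ext (G ++ N) (D ++ m :: Th) -> skel N = [m] -> (m = CVar b \/ m = CMark b) ->
  ~ In b (names_ctx G) ->
  ctx_ext G D /\
  forall s, ground_sol s D ->
    exists s', ground_sol s' (D ++ m :: Th) /\ forall x, In x (dom G) -> s' x = s x.
Proof.
  intros O HN Hm Hb.
  assert (Hskel_m : skel_entry m = [m]) by (destruct Hm; subst; reflexivity).
  assert (Hdom_m : forall x, In x (dom_entry m) -> x = b)
    by (intros x Hx; destruct Hm; subst; simpl in Hx;
        [destruct Hx as [Hx|[]]|]; auto; contradiction).
  assert (Hm_G : ~ In m (skel G)).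
  { intros H; apply Hb, (In_names_ctx G m); [apply In_skel, H|].
    destruct Hm; subst; left; reflexivity. }
  assert (Hbefore : forall x l, skel_before G x = Some l -> skel_before D x = Some l).
  { intros x l H; assert (H' := ext_before _ _ O x l).
    rewrite !skel_before_app, H in H'; specialize (H' eq_refl).
    destruct (skel_before D x) as [l'|]; auto.
    destruct (skel_before (m :: Th) x) as [l''|] eqn:E; [|discriminate].
    inversion H'; subst; exfalso; cbn [skel_before] in E.
    destruct (skel_before_Some _ _ _ H) as [Hx Hl].
    destruct (in_dec Nat.eq_dec x (dom_entry m)) as [Hi|Hi].
    - apply Hb; rewrite <- (Hdom_m x Hi); apply dom_names_ctx, Hx.
    - destruct (skel_before Th x); [|discriminate]; inversion E; subst.
      apply Hm_G, Hl, in_or_app; right; rewrite Hskel_m; left; reflexivity. }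
  assert (Hdisj : forall x, In x (dom G) -> ~ In x (dom (m :: Th))).
  { intros x Hx; destruct (skel_before_dom G x Hx) as [l E].
    destruct (skel_before_Some _ _ _ (Hbefore _ _ E)) as [HxD _].
    assert (HmT := ext_ordered _ _ O); apply ordered_ctx_app in HmT.
    exact (ordered_after_disjoint _ _ _ (proj2 HmT) HxD). }
  split; [split|].
  - exact (proj1 (proj1 (ordered_ctx_app _ _) (ext_ordered _ _ O))).
  - assert (Hs := ext_skel _ _ O); rewrite !skel_app, HN in Hs.
    unfold skel in Hs at 2; simpl in Hs; fold (skel Th) in Hs; rewrite Hskel_m in Hs.
    eapply app_cons_eq_app_snoc; eauto.
  - exact Hbefore.
  - intros x t H; assert (H' : In (CSolved x t) (D ++ m :: Th))
      by (apply (ext_solved _ _ O), in_or_app; auto).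
    apply in_app_or in H'; destruct H' as [H'|H']; auto.
    exfalso; apply (Hdisj x); eapply In_dom; eauto; left; reflexivity.
  - intros s Hs.
    destruct (ground_sol_extend D (m :: Th) s (ext_ordered _ _ O) Hs) as [s' [Hs' Hag]].
    exists s'; split; auto.
Qed.

Lemma esubst_fresh (s : nat -> typ) (D G : ctx) (A : typ) (a : nat) :
  ground_sol s D -> (forall y, In (CVar y) D -> In (CVar y) G) ->
  ~ In a (names_ctx G) -> ~ In a (names_typ A) -> ~ In a (names_typ (esubst s A)).
Proof.
  intros Hs HDG HaG HaA H; apply names_esubst in H; destruct H as [H|[x H]]; auto.
  destruct (gs_ground _ _ Hs x) as [_ [He Hu]].
  apply HaG, (In_names_ctx G (CVar a)); [apply HDG, Hu, names_no_evars; auto|left; reflexivity].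
Qed.

(* [decl_part] is invariant under extension, which is what allows the derivations
   obtained in different contexts along a rule to be combined. *)
Definition sound (G : ctx) (A B : typ) (D : ctx) : Prop :=
  ordered_ctx G -> incl (evars_typ A) (dom G) -> incl (evars_typ B) (dom G) ->
  ctx_ext G D /\ forall s, ground_sol s D -> dsub (decl_part G) (esubst s A) (esubst s B).

Lemma sound_by_solution (G D : ctx) (A B : typ) :
  (ordered_ctx G -> ctx_ext G D) -> mono A ->
  (forall y, In y (uvars_typ A) -> In (CVar y) G) ->
  (forall s, ground_sol s D -> esubst s B = esubst s A) ->
  sound G A B D /\ sound G B A D.
Proof.
  intros HO Hm Hu Heq.
  assert (Hrefl : forall s, ordered_ctx G -> ground_sol s D ->
            dsub (decl_part G) (esubst s A) (esubst s A)).
  { intros s Hok Hs; apply dsub_refl_ground, (ground_mono_esubst s D); auto.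
    - intros y Hy; apply In_CVar_decl_part, (ext_CVar G D); auto.
    - intros y Hy; apply In_CVar_decl_part; auto. }
  split; intros Hok _ _; split; auto; intros s Hs; rewrite (Heq s Hs); auto.
Qed.

Lemma sound_refl (G : ctx) (A : typ) :
  mono A -> (forall y, In y (uvars_typ A) -> In (CVar y) G) -> sound G A A G.
Proof. intros Hm Hu; apply (sound_by_solution G G A A); auto using ctx_ext_refl. Qed.

Lemma sound_solve (G1 G2 : ctx) (a : nat) (t : typ) :
  mono t -> wf_typ G1 t ->
  sound (G1 ++ CEx a :: G2) t (TEx a) (G1 ++ CSolved a t :: G2) /\
  sound (G1 ++ CEx a :: G2) (TEx a) t (G1 ++ CSolved a t :: G2).
Proof.
  intros Hm Hw; apply sound_by_solution; auto.
  - intros Hok; apply ext_solve; auto.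
  - intros y Hy; apply in_or_app; left; apply (mono_over_of_wf G1 t Hm Hw), Hy.
  - intros s Hs; apply (gs_solved _ _ Hs), in_or_app; right; left; reflexivity.
Qed.

Lemma sound_reach (G1 G2 G3 : ctx) (a b : nat) :
  sound (G1 ++ CEx a :: G2 ++ CEx b :: G3) (TEx a) (TEx b)
        (G1 ++ CEx a :: G2 ++ CSolved b (TEx a) :: G3) /\
  sound (G1 ++ CEx a :: G2 ++ CEx b :: G3) (TEx b) (TEx a)
        (G1 ++ CEx a :: G2 ++ CSolved b (TEx a) :: G3).
Proof.
  apply sound_by_solution; [apply ext_reach|constructor|intros y []|].
  intros s Hs; apply (gs_solved _ _ Hs).
  rewrite !app_comm_cons, !app_assoc; apply in_or_app; right; left; reflexivity.
Qed.

Lemma sound_arrow (G T D : ctx) (A1 A2 B1 B2 : typ) :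
  sound G B1 A1 T -> sound T (ctx_apply T A2) (ctx_apply T B2) D ->
  sound G (TArr A1 A2) (TArr B1 B2) D.
Proof.
  intros IH1 IH2 Hok HA HB; simpl in HA, HB.
  apply incl_app_inv in HA as [HA1 HA2]; apply incl_app_inv in HB as [HB1 HB2].
  destruct (IH1 Hok HB1 HA1) as [O1 S1].
  destruct (IH2 (ext_ordered _ _ O1) (evars_ctx_apply_ext _ _ _ O1 HA2)
                (evars_ctx_apply_ext _ _ _ O1 HB2)) as [O2 S2].
  split; [exact (ctx_ext_trans _ _ _ O1 O2)|]; intros s Hs; constructor.
  - exact (S1 s (ground_sol_ext _ _ _ O2 Hs)).
  - specialize (S2 s Hs); rewrite !(esubst_ctx_apply_ext s T D), (ext_decl_part _ _ O1) in S2;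
      auto.
Qed.

Lemma sound_inst_arrow_l (G1 G2 Th D : ctx) (a a1 a2 : nat) (A1 A2 : typ) :
  a1 <> a2 -> fresh a1 (G1 ++ CEx a :: G2) [A1; A2] -> fresh a2 (G1 ++ CEx a :: G2) [A1; A2] ->
  sound (G1 ++ CEx a2 :: CEx a1 :: CSolved a (TArr (TEx a1) (TEx a2)) :: G2) A1 (TEx a1) Th ->
  sound Th (TEx a2) (ctx_apply Th A2) D ->
  sound (G1 ++ CEx a :: G2) (TEx a) (TArr A1 A2) D.
Proof.
  intros Hne Hf1 Hf2 IH1 IH2 Hok _ HA; simpl in HA; apply incl_app_inv in HA as [HA1 HA2].
  set (G' := G1 ++ CEx a2 :: CEx a1 :: CSolved a (TArr (TEx a1) (TEx a2)) :: G2) in *.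
  assert (O1 : ctx_ext (G1 ++ CEx a :: G2) G')
    by (apply ext_split_arrow; auto; eapply fresh_ctx; eauto).
  assert (Ha1 : incl (evars_typ (TEx a1)) (dom G')).
  { intros z [Hz|[]]; subst; apply ex_declared_dom; left.
    apply in_or_app; right; right; left; reflexivity. }
  destruct (IH1 (ext_ordered _ _ O1) (fun z Hz => ext_dom _ _ z O1 (HA1 z Hz)) Ha1) as [O2 S2].
  assert (Ha2 : incl (evars_typ (TEx a2)) (dom Th)).
  { intros z [Hz|[]]; subst; apply (ext_dom _ _ _ O2), ex_declared_dom; left.
    apply in_or_app; right; left; reflexivity. }
  assert (O12 := ctx_ext_trans _ _ _ O1 O2).
  destruct (IH2 (ext_ordered _ _ O2) Ha2 (evars_ctx_apply_ext _ _ _ O12 HA2)) as [O3 S3].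
  split; [exact (ctx_ext_trans _ _ _ O12 O3)|]; intros s Hs.
  assert (Hsa : s a = TArr (s a1) (s a2)).
  { change (s a = esubst s (TArr (TEx a1) (TEx a2))).
    apply (gs_solved _ _ Hs), (ext_solved _ _ O3), (ext_solved _ _ O2), in_or_app.
    right; right; right; left; reflexivity. }
  cbn [esubst]; rewrite Hsa; constructor.
  - specialize (S2 s (ground_sol_ext _ _ _ O3 Hs)); rewrite (ext_decl_part _ _ O1) in S2; exact S2.
  - specialize (S3 s Hs); rewrite (esubst_ctx_apply_ext s Th D), (ext_decl_part _ _ O12) in S3;
      auto.
Qed.

Lemma sound_inst_arrow_r (G1 G2 Th D : ctx) (a a1 a2 : nat) (A1 A2 : typ) :
  a1 <> a2 -> fresh a1 (G1 ++ CEx a :: G2) [A1; A2] -> fresh a2 (G1 ++ CEx a :: G2) [A1; A2] ->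
  sound (G1 ++ CEx a2 :: CEx a1 :: CSolved a (TArr (TEx a1) (TEx a2)) :: G2) (TEx a1) A1 Th ->
  sound Th (ctx_apply Th A2) (TEx a2) D ->
  sound (G1 ++ CEx a :: G2) (TArr A1 A2) (TEx a) D.
Proof.
  intros Hne Hf1 Hf2 IH1 IH2 Hok HA _; simpl in HA; apply incl_app_inv in HA as [HA1 HA2].
  set (G' := G1 ++ CEx a2 :: CEx a1 :: CSolved a (TArr (TEx a1) (TEx a2)) :: G2) in *.
  assert (O1 : ctx_ext (G1 ++ CEx a :: G2) G')
    by (apply ext_split_arrow; auto; eapply fresh_ctx; eauto).
  assert (Ha1 : incl (evars_typ (TEx a1)) (dom G')).
  { intros z [Hz|[]]; subst; apply ex_declared_dom; left.
    apply in_or_app; right; right; left; reflexivity. }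
  destruct (IH1 (ext_ordered _ _ O1) Ha1 (fun z Hz => ext_dom _ _ z O1 (HA1 z Hz))) as [O2 S2].
  assert (Ha2 : incl (evars_typ (TEx a2)) (dom Th)).
  { intros z [Hz|[]]; subst; apply (ext_dom _ _ _ O2), ex_declared_dom; left.
    apply in_or_app; right; left; reflexivity. }
  assert (O12 := ctx_ext_trans _ _ _ O1 O2).
  destruct (IH2 (ext_ordered _ _ O2) (evars_ctx_apply_ext _ _ _ O12 HA2) Ha2) as [O3 S3].
  split; [exact (ctx_ext_trans _ _ _ O12 O3)|]; intros s Hs.
  assert (Hsa : s a = TArr (s a1) (s a2)).
  { change (s a = esubst s (TArr (TEx a1) (TEx a2))).
    apply (gs_solved _ _ Hs), (ext_solved _ _ O3), (ext_solved _ _ O2), in_or_app.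
    right; right; right; left; reflexivity. }
  cbn [esubst]; rewrite Hsa; constructor.
  - specialize (S2 s (ground_sol_ext _ _ _ O3 Hs)); rewrite (ext_decl_part _ _ O1) in S2; exact S2.
  - specialize (S3 s Hs); rewrite (esubst_ctx_apply_ext s Th D), (ext_decl_part _ _ O12) in S3;
      auto.
Qed.

Lemma sound_all_l (G D Th : ctx) (A B : typ) (a : nat) :
  ~ In a (names_ctx G) ->
  sound (G ++ [CMark a; CEx a]) (open A (TEx a)) B (D ++ CMark a :: Th) ->
  sound G (TAll A) B D.
Proof.
  intros Ha IH Hok HA HB.
  destruct IH as [O S].
  - apply ordered_snoc_mark_ex; auto.
  - intros z Hz; rewrite dom_app; apply in_or_app.
    destruct (evars_open _ _ _ Hz) as [Hz'|[Hz'|[]]]; [left; apply HA, Hz'|subst].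
    right; simpl; auto.
  - intros z Hz; rewrite dom_app; apply in_or_app; left; apply HB, Hz.
  - destruct (ext_close_scope G [CMark a; CEx a] D Th (CMark a) a O eq_refl (or_intror eq_refl) Ha)
      as [OG Hext].
    split; [exact OG|]; intros s Hs; destruct (Hext s Hs) as [s' [Hs' Hag]].
    specialize (S s' Hs').
    rewrite decl_part_app, app_nil_r, esubst_open in S by apply (gs_ground _ _ Hs').
    rewrite (esubst_ext s' s A), (esubst_ext s' s B) in S
      by (intros z Hz; apply Hag; auto).
    apply ds_allL with (s' a); [apply (gs_ground _ _ Hs')| |exact S].
    apply wf_typ_ground, (ground_mono_weaken (D ++ CMark a :: Th)); [|apply (gs_ground _ _ Hs')].
    intros y Hy; apply In_CVar_decl_part.
    apply (ext_CVar _ _ _ O), in_app_or in Hy; destruct Hy as [Hy|[Hy|[Hy|[]]]]; auto; discriminate.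
Qed.

Lemma sound_all_r (G D Th : ctx) (A B : typ) (a : nat) :
  ~ In a (names_ctx G) -> ~ In a (names_typ A) -> ~ In a (names_typ B) ->
  sound (G ++ [CVar a]) A (open B (TFVar a)) (D ++ CVar a :: Th) ->
  sound G A (TAll B) D.
Proof.
  intros Ha HaA HaB IH Hok HA HB.
  destruct IH as [O S].
  - apply ordered_snoc_var; auto.
  - intros z Hz; rewrite dom_app; apply in_or_app; left; apply HA, Hz.
  - intros z Hz; rewrite dom_app; apply in_or_app.
    destruct (evars_open _ _ _ Hz) as [Hz'|[]]; left; apply HB, Hz'.
  - destruct (ext_close_scope G [CVar a] D Th (CVar a) a O eq_refl (or_introl eq_refl) Ha)
      as [OG Hext].
    split; [exact OG|]; intros s Hs; destruct (Hext s Hs) as [s' [Hs' Hag]].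
    specialize (S s' Hs').
    rewrite decl_part_app, esubst_open in S by apply (gs_ground _ _ Hs').
    rewrite (esubst_ext s' s A), (esubst_ext s' s B) in S
      by (intros z Hz; apply Hag; auto).
    assert (HDG : forall y, In (CVar y) D -> In (CVar y) G) by (intros y; apply ext_CVar, OG).
    apply ds_allR with a; [|eapply esubst_fresh; eauto..|exact S].
    intros H; apply Ha, names_ctx_decl_part, H.
Qed.

Scheme asub_min := Minimality for asub Sort Prop
with inst_l_min := Minimality for inst_l Sort Prop
with inst_r_min := Minimality for inst_r Sort Prop.
Combined Scheme asub_inst_mutind from asub_min, inst_l_min, inst_r_min.

Lemma asub_inst_sound :
  (forall G A B D, asub G A B D -> sound G A B D) /\
  (forall G a A D, inst_l G a A D -> sound G (TEx a) A D) /\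
  (forall G A a D, inst_r G A a D -> sound G A (TEx a) D).
Proof.
  apply asub_inst_mutind.
  - intros G a Ha; apply sound_refl; [constructor|intros y [Hy|[]]; subst; exact Ha].
  - intros G; apply sound_refl; [constructor|intros y []].
  - intros G a _; apply sound_refl; [constructor|intros y []].
  - intros G T D A1 A2 B1 B2 _ IH1 _ IH2; exact (sound_arrow _ _ _ _ _ _ _ IH1 IH2).
  - intros G A B D Th a Hf _ IH; exact (sound_all_l _ _ _ _ _ _ (fresh_ctx _ _ _ Hf) IH).
  - intros G A B D Th a Hf _ IH; apply (sound_all_r G D Th A B a); auto;
      [exact (fresh_ctx _ _ _ Hf)|apply (fresh_typ _ _ _ _ Hf); simpl; auto..].
  - intros G a A D _ _ _ IH; exact IH.
  - intros G a A D _ _ _ IH; exact IH.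
  - intros G1 G2 a t Hm Hw; apply sound_solve; auto.
  - intros G1 G2 G3 a b; apply sound_reach.
  - intros G1 G2 a a1 a2 A1 A2 Th D Hne Hf1 Hf2 _ IH1 _ IH2; eapply sound_inst_arrow_l; eauto.
  - intros G a B b D D' Ha Hf _ IH; apply (sound_all_r G D D' (TEx a) B b); auto.
    + exact (fresh_ctx _ _ _ Hf).
    + apply (names_ex_declared G); [left; exact Ha|exact (fresh_ctx _ _ _ Hf)].
    + apply (fresh_typ _ _ _ _ Hf); left; reflexivity.
  - intros G1 G2 a t Hm Hw; apply sound_solve; auto.
  - intros G1 G2 G3 a b; apply sound_reach.
  - intros G1 G2 a a1 a2 A1 A2 Th D Hne Hf1 Hf2 _ IH1 _ IH2; eapply sound_inst_arrow_r; eauto.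
  - intros G a B b D D' Ha Hf _ IH; exact (sound_all_l _ _ _ _ _ _ (fresh_ctx _ _ _ Hf) IH).
Qed.

Lemma decl_ctx_no_evars (G : ctx) (A : typ) :
  decl_ctx G -> wf_typ G A -> evars_typ A = [].
Proof.
  intros Hd Hw; destruct (evars_typ A) as [|x l] eqn:E; [reflexivity|exfalso].
  destruct (wf_typ_evars G A x Hw) as [H|[t H]]; [rewrite E; left; reflexivity| |];
    unfold decl_ctx in Hd; rewrite Forall_forall in Hd; exact (Hd _ H).
Qed.

Theorem mainTheorem7 :
  forall (Psi : ctx) (A B : typ) (Delta : ctx),
    decl_ctx Psi -> wf_ctx Psi ->
    wf_typ Psi A -> wf_typ Psi B ->
    asub Psi A B Delta ->
    dsub Psi A B.
Proof.
  intros Psi A B Delta Hd Hw HA HB Hsub.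
  assert (EA := decl_ctx_no_evars Psi A Hd HA).
  assert (EB := decl_ctx_no_evars Psi B Hd HB).
  destruct (proj1 asub_inst_sound Psi A B Delta Hsub (ordered_of_wf_ctx Psi Hw))
    as [O S]; [rewrite EA; intros x []|rewrite EB; intros x []|].
  destruct (ground_sol_exists Delta (ext_ordered _ _ O)) as [s Hs].
  specialize (S s Hs); rewrite !esubst_closed, decl_part_of_decl in S; auto.
Qed.
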